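(* Let $A,B,C,D,E\in\mathbb{C}$ with $E\neq0$, $M=\{(x,y,z)\in\mathbb{C}^3 : x^2+y^2+z^2+Exyz-Ax-By-Cz-D=0\}$, and let $V^x=(2z+Exy-C)\partial_y-(2y+Exz-B)\partial_z$, $V^y=-(2z+Exy-C)\partial_x+(2x+Eyz-A)\partial_z$, $V^z=(2y+Exz-B)\partial_x-(2x+Eyz-A)\partial_y$ (vector fields tangent to $M$). For every entire holomorphic function $f\colon\mathbb{C}\to\mathbb{C}$, the vector fields $f(x)V^x$, $f(y)V^y$, $f(z)V^z$ on $M$ are complete. *)

From Stdlib Require Import Reals.
From Coquelicot Require Import Coquelicot.

Local Open Scope C_scope.

Definition C3 : Type := (C * C * C)%type.
Definition px (p : C3) : C := fst (fst p).
Definition py (p : C3) : C := snd (fst p).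
Definition pz (p : C3) : C := snd p.

Definition two : C := RtoC 2.

Definition onM (A B Cc D E : C) (p : C3) : Prop :=
  let x := px p in let y := py p in let z := pz p in
  x * x + y * y + z * z + E * x * y * z - A * x - B * y - Cc * z - D = RtoC 0.

Definition Vx (A B Cc D E : C) (p : C3) : C3 :=
  let x := px p in let y := py p in let z := pz p in
  (RtoC 0, two * z + E * x * y - Cc, - (two * y + E * x * z - B)).
Definition Vy (A B Cc D E : C) (p : C3) : C3 :=
  let x := px p in let y := py p in let z := pz p in
  (- (two * z + E * x * y - Cc), RtoC 0, two * x + E * y * z - A).
Definition Vz (A B Cc D E : C) (p : C3) : C3 :=
  let x := px p in let y := py p in let z := pz p in
  (two * y + E * x * z - B, - (two * x + E * y * z - A), RtoC 0).

Definition entire (f : C -> C) : Prop :=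
  forall z : C, @ex_derive C_AbsRing C_NormedModule f z.

Definition integral_curve (V : C3 -> C3) (phi : C -> C3) : Prop :=
  forall t : C,
    @is_derive C_AbsRing C_NormedModule (fun s => px (phi s)) t (px (V (phi t))) /\
    @is_derive C_AbsRing C_NormedModule (fun s => py (phi s)) t (py (V (phi t))) /\
    @is_derive C_AbsRing C_NormedModule (fun s => pz (phi s)) t (pz (V (phi t))).

Definition complete_on (S : C3 -> Prop) (V : C3 -> C3) : Prop :=
  forall p : C3, S p ->
    exists phi : C -> C3, phi (RtoC 0) = p /\ (forall t : C, S (phi t)) /\
      integral_curve V phi.

Definition scale_field (g : C3 -> C) (V : C3 -> C3) (p : C3) : C3 :=
  let v := V p in (g p * px v, g p * py v, g p * pz v).

From Stdlib Require Import Reals Lra Psatz.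
From Coquelicot Require Import Coquelicot.

(* V^x has no d/dx component.  On the slice x = x0 the field c V^x is affine in
   (y, z) with traceless linear part N, hence N^2 = mu for a scalar mu, and its
   flow through p is p + S(t) w + T(t) N w with w = c V^x(p), S(t) = sinh(l t)/l,
   T(t) = (cosh(l t) - 1)/l^2 and l^2 = mu: this is defined for every complex t.
   Along it the defining polynomial of M changes by (S^2 - 2T - mu T^2) Q(w) = 0.
   The cases of V^y and V^z follow by the cyclic change of coordinates
   (x, y, z) -> (y, z, x), (A, B, C) -> (B, C, A). *)

Section RealBounds.
Local Open Scope R_scope.

Lemma exp_sub_1_sub_le (a : R) : Rabs a <= 1/2 -> Rabs (exp a - 1 - a) <= 2 * a ^ 2.
Proof.
  intros Ha. apply Rabs_le_between in Ha.
  pose proof (exp_ineq1_le a) as Hlow. pose proof (exp_ineq1_le (- a)) as Hneg.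
  assert (Hinv : exp a * exp (- a) = 1) by (rewrite <- exp_plus, Rplus_opp_r; apply exp_0).
  assert (Hprod : exp a * (1 - a) <= 1).
  { rewrite <- Hinv. apply Rmult_le_compat_l; [apply Rlt_le, exp_pos | lra]. }
  rewrite Rabs_pos_eq by lra. nra.
Qed.

Lemma cos_sub_1_le (b : R) : Rabs b <= 1/2 -> Rabs (cos b - 1) <= b ^ 2 / 2.
Proof.
  intros Hb. apply Rabs_le_between in Hb. pose proof PI2_1.
  destruct (cos_bound b 0 ltac:(lra) ltac:(lra)) as [Hlow Hup].
  unfold cos_approx, cos_term in Hlow, Hup. simpl in Hlow, Hup.
  field_simplify in Hlow. field_simplify in Hup.
  assert (Hb2 : b ^ 2 <= 1/4) by nra. pose proof (pow2_ge_0 b).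
  assert (b ^ 4 <= b ^ 2 / 4) by (replace (b ^ 4) with (b ^ 2 * b ^ 2) by ring; nra).
  apply Rabs_le. split; lra.
Qed.

Lemma sin_sub_le (b : R) : Rabs b <= 1/2 -> Rabs (sin b - b) <= b ^ 2 / 2.
Proof.
  assert (Hpos : forall x, 0 <= x <= 1/2 -> Rabs (sin x - x) <= x ^ 2 / 2).
  { intros x Hx. pose proof PI2_1.
    destruct (sin_bound x 0 ltac:(lra) ltac:(lra)) as [Hlow _].
    unfold sin_approx, sin_term in Hlow. simpl in Hlow. field_simplify in Hlow.
    assert (sin x <= x)
      by (destruct (Req_dec x 0) as [-> |]; [rewrite sin_0 | apply Rlt_le, sin_lt_x]; lra).
    apply Rabs_le. nra. }
  intros Hb. destruct (Rle_dec 0 b) as [Hb0|Hb0].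
  - apply Hpos. apply Rabs_le_between in Hb. lra.
  - replace (sin b - b) with (- (sin (- b) - - b)) by (rewrite sin_neg; ring).
    rewrite Rabs_Ropp. replace (b ^ 2) with ((- b) ^ 2) by ring.
    apply Hpos. apply Rabs_le_between in Hb. lra.
Qed.

End RealBounds.

Local Open Scope C_scope.

Definition cexp (z : C) : C := (exp (Re z) * cos (Im z), exp (Re z) * sin (Im z))%R.

Lemma cexp_add (z w : C) : cexp (z + w) = cexp z * cexp w.
Proof.
  destruct z as [a b], w as [c d]. unfold cexp, Cplus, Cmult, Re, Im; simpl.
  rewrite exp_plus, cos_plus, sin_plus. f_equal; ring.
Qed.

Lemma cexp_0 : cexp 0 = 1.
Proof. unfold cexp, Re, Im, RtoC; simpl. rewrite exp_0, cos_0, sin_0. f_equal; ring. Qed.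

Lemma cexp_neq_0 (z : C) : cexp z <> 0.
Proof.
  intros Hz. apply C1_nz.
  rewrite <- cexp_0, <- (Cplus_opp_r z), cexp_add, Hz. ring.
Qed.

Lemma cexp_opp (z : C) : cexp (- z) = / cexp z.
Proof.
  pose proof (cexp_neq_0 z) as Hz.
  rewrite <- (Cmult_1_l (/ cexp z)), <- cexp_0, <- (Cplus_opp_r z), cexp_add.
  field. exact Hz.
Qed.

Lemma Cmod_le_Rabs_add (a b : R) : (Cmod (a, b) <= Rabs a + Rabs b)%R.
Proof.
  replace (a, b) with (RtoC a + Ci * RtoC b)
    by (unfold Ci, RtoC, Cplus, Cmult; simpl; f_equal; ring).
  rewrite <- (Cmod_R a), <- (Cmod_R b), <- (Rmult_1_l (Cmod b)), <- Cmod_Ci, <- Cmod_mult.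
  apply Cmod_triangle.
Qed.

Lemma Cmod_cis (b : R) : Cmod (cos b, sin b) = 1%R.
Proof.
  unfold Cmod; simpl fst; simpl snd.
  rewrite <- sqrt_1. f_equal. rewrite <- (sin2_cos2 b). unfold Rsqr. ring.
Qed.

Lemma cexp_sub_1_sub_le (h : C) :
  (Cmod h <= 1/2 -> Cmod (cexp h - 1 - h) <= 3 * Cmod h ^ 2)%R.
Proof.
  destruct h as [a b]. intros Hh.
  pose proof (Rmax_Cmod (a, b)) as Hab; simpl in Hab.
  assert (Ha : (Rabs a <= Cmod (a, b))%R) by (eapply Rle_trans; [apply Rmax_l | exact Hab]).
  assert (Hb : (Rabs b <= Cmod (a, b))%R) by (eapply Rle_trans; [apply Rmax_r | exact Hab]).
  assert (Hnorm : (Cmod (a, b) ^ 2 = Rabs a ^ 2 + Rabs b ^ 2)%R)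
    by (rewrite Cmod2_alt, !pow2_abs; reflexivity).
  (* e^(a+ib) - 1 - (a+ib) = (e^a - 1 - a) e^(ib) + (1 + a)(e^(ib) - 1 - ib) + iab *)
  replace (cexp (a, b) - 1 - (a, b))
    with (RtoC (exp a - 1 - a) * (cos b, sin b) + RtoC (1 + a) * (cos b - 1, sin b - b)%R
          + (0, a * b)%R)
    by (unfold cexp, Re, Im, Cminus, Copp, Cplus, Cmult, RtoC; simpl; f_equal; ring).
  eapply Rle_trans; [apply Cmod_triangle |].
  eapply Rle_trans; [apply Rplus_le_compat_r, Cmod_triangle |].
  rewrite !Cmod_mult, !Cmod_R, Cmod_cis.
  pose proof (exp_sub_1_sub_le a ltac:(lra)) as He.
  pose proof (cos_sub_1_le b ltac:(lra)) as Hc.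
  pose proof (sin_sub_le b ltac:(lra)) as Hs.
  pose proof (Cmod_le_Rabs_add (cos b - 1) (sin b - b)) as Hcs.
  pose proof (Cmod_le_Rabs_add 0 (a * b)) as Hi. rewrite Rabs_R0, Rabs_mult in Hi.
  assert (H1a : (Rabs (1 + a) <= 3/2)%R) by (apply Rabs_le; apply Rabs_le_between in Ha; lra).
  rewrite <- (pow2_abs a) in He. rewrite <- (pow2_abs b) in Hc, Hs.
  pose proof (Rabs_pos a). pose proof (Rabs_pos b). pose proof (Cmod_ge_0 (cos b - 1, sin b - b)%R).
  nra.
Qed.

(* Derivatives of functions C -> C are taken in C as a normed module over itself, the
   setting of [is_derive_mult] and [is_derive_scal_l]; it is not convertible to the
   [C_NormedModule] used by [integral_curve]. *)
Notation C_self := (AbsRing_NormedModule C_AbsRing).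
Notation is_cderive f z l := (@is_derive C_AbsRing C_self f z l).

Lemma is_cderive_of_remainder_le (F : C -> C) (z l : C) (K r : R) :
  (0 < r)%R ->
  (forall h, Cmod h <= r -> Cmod (F (z + h) - F z - h * l)%C <= K * Cmod h ^ 2)%R ->
  is_cderive F z l.
Proof.
  intros Hr Hrem. split; [apply is_linear_scal_l |].
  intros x Hx.
  apply (@is_filter_lim_locally_unique _ C_self) in Hx. subst x.
  intros eps.
  assert (Hd : (0 < Rmin r (eps / (Rabs K + 1)))%R).
  { apply Rmin_pos; [lra |].
    apply Rdiv_lt_0_compat; [apply cond_pos | pose proof (Rabs_pos K); lra]. }
  exists (mkposreal _ Hd). intros y Hy.
  change (Cmod (y - z)%C < Rmin r (eps / (Rabs K + 1)))%R in Hy.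
  change (Cmod (F y - F z - (y - z) * l)%C <= eps * Cmod (y - z)%C)%R.
  set (h := y - z) in *.
  replace y with (z + h) by (unfold h; ring).
  pose proof (Rmin_l r (eps / (Rabs K + 1))). pose proof (Rmin_r r (eps / (Rabs K + 1))).
  assert (HKh : (Rabs K * Cmod h <= eps)%R).
  { pose proof (Rabs_pos K). pose proof (cond_pos eps).
    apply Rle_trans with (Rabs K * (eps / (Rabs K + 1)))%R; [apply Rmult_le_compat_l; lra |].
    apply Rmult_le_reg_r with (Rabs K + 1)%R; [lra |]. field_simplify; nra. }
  eapply Rle_trans; [apply Hrem; lra |].
  pose proof (Cmod_ge_0 h). pose proof (Rle_abs K). nra.
Qed.

Lemma is_cderive_cexp (z : C) : is_cderive cexp z (cexp z).
Proof.
  apply (is_cderive_of_remainder_le _ _ _ (Cmod (cexp z) * 3) (1/2)); [lra |].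
  intros h Hh.
  replace (cexp (z + h) - cexp z - h * cexp z) with (cexp z * (cexp h - 1 - h))
    by (rewrite cexp_add; ring).
  rewrite Cmod_mult. pose proof (Cmod_ge_0 (cexp z)).
  rewrite Rmult_assoc. apply Rmult_le_compat_l; [lra |].
  apply cexp_sub_1_sub_le, Hh.
Qed.

Lemma C_sqrt_exists (m : C) : exists l : C, l * l = m.
Proof.
  destruct m as [a b].
  set (r := sqrt (a ^ 2 + b ^ 2)).
  assert (Hr : (r * r = a ^ 2 + b ^ 2)%R) by (apply sqrt_sqrt; nra).
  assert (Hra : (Rabs a <= r)%R).
  { unfold r. rewrite <- sqrt_Rsqr_abs. apply sqrt_le_1_alt. unfold Rsqr. nra. }
  apply Rabs_le_between in Hra.
  set (u := sqrt ((r + a) / 2)). set (v := sqrt ((r - a) / 2)).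
  assert (Hu : (u * u = (r + a) / 2)%R) by (apply sqrt_sqrt; lra).
  assert (Hv : (v * v = (r - a) / 2)%R) by (apply sqrt_sqrt; lra).
  assert (Huv : (u * v = Rabs b / 2)%R).
  { unfold u, v. rewrite <- sqrt_mult by lra.
    replace ((r + a) / 2 * ((r - a) / 2))%R with (Rsqr (Rabs b / 2)).
    2:{ unfold Rsqr. replace (Rabs b / 2 * (Rabs b / 2))%R with (Rabs b ^ 2 / 4)%R by field.
        rewrite pow2_abs. lra. }
    apply sqrt_Rsqr. pose proof (Rabs_pos b). lra. }
  destruct (Rle_dec 0 b) as [Hb | Hb].
  - exists (u, v). rewrite Rabs_pos_eq in Huv by lra.
    unfold Cmult; simpl. f_equal; nra.
  - exists (u, - v)%R. rewrite Rabs_left in Huv by lra.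
    unfold Cmult; simpl. f_equal; nra.
Qed.

(* For mu = l * l the solution is S t = sinh (l t) / l, T t = (cosh (l t) - 1) / mu; the
   last clause is the first integral of the system [S' = 1 + mu T, T' = S]. *)
Definition hyperbolic_pair (mu : C) (S T : C -> C) : Prop :=
  S 0 = 0 /\ T 0 = 0 /\
  (forall t, is_cderive S t (1 + mu * T t)) /\ (forall t, is_cderive T t (S t)) /\
  (forall t, S t * S t = 2 * T t + mu * T t * T t).

Ltac simpl_C := repeat progress (cbv [plus minus opp mult scal one zero]; simpl).

Lemma is_cderive_cexp_scal (l t : C) : is_cderive (fun s => cexp (s * l)) t (l * cexp (t * l)).
Proof.
  eapply eq_ind.
  - apply (@is_derive_comp _ C_self cexp (fun s => s * l)); [apply is_cderive_cexp |].
    apply (@is_derive_scal_l _ C_self (fun s => s)), (@is_derive_id C_AbsRing).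
  - simpl_C. ring.
Qed.

Lemma polynomial_hyperbolic_pair : hyperbolic_pair 0 (fun t => t) (fun t => t * t / 2).
Proof.
  unfold hyperbolic_pair. split; [|split; [|split; [|split]]]; intros.
  - reflexivity.
  - field.
  - eapply eq_ind; [apply (@is_derive_id C_AbsRing) | simpl_C; ring].
  - eapply eq_ind.
    + apply (@is_derive_scal_l _ C_self (fun s => s * s)).
      apply (@is_derive_mult C_AbsRing);
        [apply is_derive_id | apply is_derive_id | apply Cmult_comm].
    + simpl_C. field.
  - field.
Qed.

Lemma exponential_hyperbolic_pair (l : C) : l <> 0 ->
  hyperbolic_pair (l * l)
    (fun t => (cexp (t * l) - cexp (t * - l)) / (2 * l))
    (fun t => (cexp (t * l) + cexp (t * - l) - 2) / (2 * (l * l))).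
Proof.
  intros Hl.
  assert (Hopp : forall t, cexp (t * - l) = / cexp (t * l)).
  { intros t. rewrite <- cexp_opp. f_equal. ring. }
  assert (Hnz : forall t, cexp (t * l) <> 0) by (intros; apply cexp_neq_0).
  assert (H0 : cexp (0 * l) = 1) by (rewrite <- cexp_0; f_equal; ring).
  unfold hyperbolic_pair. split; [|split; [|split; [|split]]]; intros.
  - rewrite Hopp, H0. field. exact Hl.
  - rewrite Hopp, H0. field. exact Hl.
  - eapply eq_ind.
    + apply (@is_derive_scal_l _ C_self (fun s => cexp (s * l) - cexp (s * - l))).
      apply (@is_derive_minus _ C_self); apply is_cderive_cexp_scal.
    + simpl_C. rewrite !Hopp. field. auto.
  - eapply eq_ind.
    + apply (@is_derive_scal_l _ C_self (fun s => cexp (s * l) + cexp (s * - l) - 2)).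
      apply (@is_derive_minus _ C_self);
        [apply (@is_derive_plus _ C_self); apply is_cderive_cexp_scal
        | apply (@is_derive_const _ C_self)].
    + simpl_C. rewrite !Hopp. field. auto.
  - rewrite Hopp. field. auto.
Qed.

Lemma hyperbolic_pair_exists (mu : C) : exists S T, hyperbolic_pair mu S T.
Proof.
  destruct (C_sqrt_exists mu) as [l <-].
  destruct (Ceq_dec l 0) as [-> | Hl].
  - rewrite Cmult_0_l. exists (fun t => t), (fun t => t * t / 2). apply polynomial_hyperbolic_pair.
  - do 2 eexists. apply exponential_hyperbolic_pair, Hl.
Qed.

Definition traceless_offset (p q r w1 w2 s t : C) : C * C :=
  (s * w1 + t * (p * w1 + q * w2), s * w2 + t * (r * w1 - p * w2)).

Lemma is_derive_traceless_offset (p q r w1 w2 : C) (S T : C -> C) :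
  hyperbolic_pair (p * p + q * r) S T ->
  forall t, let u s := traceless_offset p q r w1 w2 (S s) (T s) in
  @is_derive C_AbsRing C_NormedModule (fun s => fst (u s)) t (w1 + p * fst (u t) + q * snd (u t)) /\
  @is_derive C_AbsRing C_NormedModule (fun s => snd (u s)) t (w2 + r * fst (u t) - p * snd (u t)).
Proof.
  intros (_ & _ & dS & dT & _) t u. unfold u, traceless_offset; simpl.
  split; (eapply eq_ind;
    [apply (@is_derive_plus _ C_NormedModule); apply (@is_derive_scal_l _ C_NormedModule);
       [apply dS | apply dT]
    | simpl_C; ring]).
Qed.

Definition surface_poly (A B Cc D E : C) (p : C3) : C :=
  let x := px p in let y := py p in let z := pz p in
  x * x + y * y + z * z + E * x * y * z - A * x - B * y - Cc * z - D.

Definition x_slice_mu (E c : C) (p : C3) : C :=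
  (c * (E * px p)) * (c * (E * px p)) + (c * 2) * - (c * 2).

(* On the slice x = px p the field c V^x is w + N (q - p) with w = c V^x(p) and the
   traceless N = [[c E x, 2 c], [-2 c, - c E x]], whose square is [x_slice_mu] times 1. *)
Definition x_flow (A B Cc E c : C) (S T : C -> C) (p : C3) (t : C) : C3 :=
  let x := px p in let y := py p in let z := pz p in
  let u := traceless_offset (c * (E * x)) (c * 2) (- (c * 2))
             (c * (two * z + E * x * y - Cc)) (c * - (two * y + E * x * z - B)) (S t) (T t) in
  (x, y + fst u, z + snd u).

Lemma surface_poly_x_flow (A B Cc D E c : C) (S T : C -> C) (p : C3) (t : C) :
  let a := E * px p in
  let w1 := c * (two * pz p + E * px p * py p - Cc) in
  let w2 := c * - (two * py p + E * px p * pz p - B) in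
  surface_poly A B Cc D E (x_flow A B Cc E c S T p t)
  = surface_poly A B Cc D E p
    + (S t * S t - 2 * T t - x_slice_mu E c p * T t * T t) * (w1 * w1 + a * w1 * w2 + w2 * w2).
Proof.
  destruct p as [[x y] z].
  unfold surface_poly, x_flow, x_slice_mu, traceless_offset, two, px, py, pz; simpl. ring.
Qed.

Lemma x_flow_integral_curve (A B Cc D E : C) (f : C -> C) (S T : C -> C) (p : C3) :
  hyperbolic_pair (x_slice_mu E (f (px p)) p) S T ->
  integral_curve (scale_field (fun q => f (px q)) (Vx A B Cc D E))
    (x_flow A B Cc E (f (px p)) S T p).
Proof.
  intros HST t. destruct p as [[x y] z]. unfold px, py, pz in HST |- *; simpl in HST |- *.
  destruct (is_derive_traceless_offset _ _ _
              (f x * (two * z + E * x * y - Cc)) (f x * - (two * y + E * x * z - B)) _ _ HST t)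
    as [Hy Hz].
  unfold scale_field, Vx, x_flow, traceless_offset, px, py, pz in Hy, Hz |- *. simpl in Hy, Hz |- *.
  split; [|split].
  - eapply eq_ind; [apply is_derive_const | simpl_C; ring].
  - eapply eq_ind; [apply (@is_derive_plus _ C_NormedModule); [apply is_derive_const | apply Hy] |].
    simpl_C. unfold two. ring.
  - eapply eq_ind; [apply (@is_derive_plus _ C_NormedModule); [apply is_derive_const | apply Hz] |].
    simpl_C. unfold two. ring.
Qed.

Lemma complete_fx_Vx (A B Cc D E : C) (f : C -> C) :
  complete_on (onM A B Cc D E) (scale_field (fun p => f (px p)) (Vx A B Cc D E)).
Proof.
  intros p Hp.
  destruct (hyperbolic_pair_exists (x_slice_mu E (f (px p)) p)) as (S & T & HST).
  exists (x_flow A B Cc E (f (px p)) S T p).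
  pose proof HST as (S0 & T0 & _ & _ & HS).
  split; [|split].
  - destruct p as [[x y] z]. unfold x_flow, traceless_offset, px, py, pz; simpl.
    rewrite S0, T0. apply (f_equal2 pair); [apply (f_equal2 pair) |]; ring.
  - intros t. change (surface_poly A B Cc D E (x_flow A B Cc E (f (px p)) S T p t) = 0).
    change (surface_poly A B Cc D E p = 0) in Hp.
    rewrite surface_poly_x_flow, Hp, HS. ring.
  - apply x_flow_integral_curve, HST.
Qed.

Definition rot (p : C3) : C3 := (py p, pz p, px p).

Lemma rot_rot_rot (p : C3) : rot (rot (rot p)) = p.
Proof. destruct p as [[x y] z]. reflexivity. Qed.

Lemma complete_on_rot (S : C3 -> Prop) (V : C3 -> C3) :
  complete_on S V -> complete_on (fun p => S (rot p)) (fun p => rot (rot (V (rot p)))).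
Proof.
  intros HV p Hp. destruct (HV (rot p) Hp) as (phi & H0 & HS & Hphi).
  exists (fun t => rot (rot (phi t))). split; [|split].
  - rewrite H0. apply rot_rot_rot.
  - intros t. rewrite rot_rot_rot. apply HS.
  - intros t. rewrite rot_rot_rot. destruct (Hphi t) as (Hx & Hy & Hz). auto.
Qed.

Lemma complete_on_ext (S S' : C3 -> Prop) (V V' : C3 -> C3) :
  (forall p, S p <-> S' p) -> (forall p, V p = V' p) -> complete_on S V -> complete_on S' V'.
Proof.
  intros HS HV HSV p Hp. destruct (HSV p (proj2 (HS p) Hp)) as (phi & H0 & Hin & Hphi).
  exists phi. split; [exact H0 | split].
  - intros t. apply HS, Hin.
  - intros t. rewrite <- !HV. apply Hphi.
Qed.

Lemma onM_rot (A B Cc D E : C) (p : C3) : onM B Cc A D E (rot p) <-> onM A B Cc D E p.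
Proof.
  destruct p as [[x y] z]. unfold onM, rot, px, py, pz; simpl.
  split; intros H; rewrite <- H; ring.
Qed.

Lemma complete_fy_Vy (A B Cc D E : C) (f : C -> C) :
  complete_on (onM A B Cc D E) (scale_field (fun p => f (py p)) (Vy A B Cc D E)).
Proof.
  eapply complete_on_ext; [apply onM_rot | | apply complete_on_rot, (complete_fx_Vx B Cc A D E f)].
  intros [[x y] z]. unfold scale_field, Vx, Vy, rot, px, py, pz; simpl.
  apply (f_equal2 pair); [apply (f_equal2 pair) |]; ring.
Qed.

Lemma complete_fz_Vz (A B Cc D E : C) (f : C -> C) :
  complete_on (onM A B Cc D E) (scale_field (fun p => f (pz p)) (Vz A B Cc D E)).
Proof.
  eapply complete_on_ext; [apply onM_rot | | apply complete_on_rot, (complete_fy_Vy B Cc A D E f)].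
  intros [[x y] z]. unfold scale_field, Vy, Vz, rot, px, py, pz; simpl.
  apply (f_equal2 pair); [apply (f_equal2 pair) |]; ring.
Qed.

Theorem corollary2p3 (A B Cc D E : C) (hE : E <> RtoC 0) (f : C -> C)
  (hf : entire f) :
  complete_on (onM A B Cc D E) (scale_field (fun p => f (px p)) (Vx A B Cc D E)) /\
  complete_on (onM A B Cc D E) (scale_field (fun p => f (py p)) (Vy A B Cc D E)) /\
  complete_on (onM A B Cc D E) (scale_field (fun p => f (pz p)) (Vz A B Cc D E)).
Proof.
  split; [| split].
  - apply complete_fx_Vx.
  - apply complete_fy_Vy.
  - apply complete_fz_Vz.
Qed.
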